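(* Let $k$ be an algebraically closed field of characteristic $0$, let $d\ge 3$ and $n\ge 2$ be integers, and let $(V_n,\Theta_d)$ be the $d$-linear space over $k$ with basis $v_1,\dots,v_n$ of $V_n$ and $\Theta_d(v_{i_1},\dots,v_{i_d})=1$ if $i_1+\dots+i_d=(d-1)n+1$ and $=0$ otherwise. Let $\mathcal{O}(\Theta_d)$ be its orthogonal group, $\mathrm{Cent}_k(\Theta_d)$ its center, $\mathbf{G}$ the group of $k$-algebra automorphisms of $\mathrm{Cent}_k(\Theta_d)$, and $\chi:\mathcal{O}(\Theta_d)\to\mathbf{G}$ the homomorphism $\chi(\sigma)(f)=\sigma f\sigma^{-1}$. Let $\mu_d=\{\zeta\in k:\zeta^d=1\}$, identified with the subgroup $\{\zeta\,\mathrm{id}_{V_n}\}$ of $\mathcal{O}(\Theta_d)$. Then $$1\longrightarrow\mu_d\longrightarrow\mathcal{O}(\Theta_d)\xrightarrow{\ \chi\ }\mathbf{G}\longrightarrow 1$$ is a short exact sequence of groups.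
   Context: A $d$-linear space over $k$ is a pair $(V,\Theta)$ with $V$ a finite-dimensional $k$-vector space and $\Theta:V^d\to k$ a symmetric $d$-linear form. Its center is $\mathrm{Cent}_k(\Theta)=\{f\in\mathrm{End}_k(V):\Theta(f(u_1),u_2,\dots,u_d)=\Theta(u_1,f(u_2),\dots,u_d)\ \forall u_i\in V\}$, a commutative subalgebra of $\mathrm{End}_k(V)$. The orthogonal group is $\mathcal{O}(\Theta)=\{\sigma\in GL_k(V):\Theta(\sigma u_1,\dots,\sigma u_d)=\Theta(u_1,\dots,u_d)\ \forall u_i\}$; conjugation by elements of $\mathcal{O}(\Theta)$ preserves $\mathrm{Cent}_k(\Theta)$. The linear map $\psi(v_i)=v_{i-1}$ (with $v_0=0$) lies in $\mathrm{Cent}_k(\Theta_d)$. *)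

From HB Require Import structures.
From mathcomp Require Import all_boot all_order all_algebra.
Set Implicit Arguments. Unset Strict Implicit. Unset Printing Implicit Defensive.
Import GRing.Theory.
Local Open Scope ring_scope.

(* V_n = k^n as column vectors 'cV[k]_n, basis vector v_{i+1} = delta at i (0-based).
   A d-tuple of vectors is given as u : nat -> 'cV_n (only u 0 .. u (d-1) matter). *)

(* Theta_d(u_0,...,u_{d-1}) = sum over index tuples (0-based) with
   sum = (d-1)(n-1), i.e. 1-based sum = (d-1)n+1, of the products of coordinates. *)
Definition Theta (k : fieldType) (d n : nat) (u : nat -> 'cV[k]_n) : k :=
  \sum_(t : {ffun 'I_d -> 'I_n} | (\sum_(j < d) (t j : nat))%N == ((d - 1) * (n - 1))%N)
     \prod_(j < d) u j (t j) ord0.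

Definition upd (k : fieldType) (n : nat) (i : nat) (f : 'M[k]_n) (u : nat -> 'cV[k]_n) :
  nat -> 'cV[k]_n := fun j => if j == i then f *m u j else u j.

Definition Cent (k : fieldType) (d n : nat) (f : 'M[k]_n) : Prop :=
  forall u : nat -> 'cV[k]_n, Theta d (upd 0 f u) = Theta d (upd 1 f u).

Definition Orth (k : fieldType) (d n : nat) (s : 'M[k]_n) : Prop :=
  s \in unitmx /\ forall u : nat -> 'cV[k]_n, Theta d (fun j => s *m u j) = Theta d u.

(* phi (a function on matrices, relevant only on Cent) is a k-algebra
   automorphism of Cent_k(Theta_d) *)
Definition CentAut (k : fieldType) (d n : nat) (phi : 'M[k]_n -> 'M[k]_n) : Prop :=
  (forall f, Cent d f -> Cent d (phi f)) /\ [/\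
      forall f g, Cent d f -> Cent d g -> phi f = phi g -> f = g,
      forall g, Cent d g -> exists2 f, Cent d f & phi f = g,
      phi 1%:M = 1%:M,
      forall a f g, Cent d f -> Cent d g -> phi (a *: f + g) = a *: phi f + phi g
    & forall f g, Cent d f -> Cent d g -> phi (f *m g) = phi f *m phi g].

Definition chi (k : fieldType) (n : nat) (s : 'M[k]_n) : 'M[k]_n -> 'M[k]_n :=
  fun f => s *m f *m invmx s.

From HB Require Import structures.
From mathcomp Require Import all_boot all_order all_algebra.
From mathcomp Require Import zify.
Import GRing.Theory.
Local Open Scope ring_scope.

Set Implicit Arguments. Unset Strict Implicit. Unset Printing Implicit Defensive.

(* Identify k^n with A = k[X]/(X^n), the basis vector v_i corresponding to
   X^(n-i).  Then Theta_d(u_1, ..., u_d) is the coefficient of X^(n-1) in the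
   product u_1 ... u_d, so the multiplication operators of A lie in the center.
   Conversely, for d >= 3, moving f between two arguments and using the
   nondegenerate pairing (a, b) |-> [X^(n-1)] ab shows that f is the
   multiplication by f(1): the center is A.
   An isometry acting trivially on A commutes with A, hence is the
   multiplication by some c with c^d = 1 in A; in characteristic 0 this forces
   c to be a constant.
   An automorphism phi of A gives a linear automorphism T of A with
   T(a x) = phi(a) T(x).  The linear form x |-> [X^(n-1)] T^-1(x) is
   x |-> [X^(n-1)] W x for a unit W of A, and W has a d-th root C in A (Hensel
   lifting, k algebraically closed of characteristic 0).  Then s = C T is an
   isometry, and s a s^-1 = phi(a). *)

Section TakePoly.
Variable R : nzRingType.
Implicit Types p q : {poly R}.

Lemma take_polyMl m p q : take_poly m (take_poly m p * q) = take_poly m (p * q).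
Proof.
apply/polyP => i; rewrite !coef_take_poly; case: ifP => // lt_im.
rewrite !coefM; apply: eq_bigr => j _; rewrite coef_take_poly ifT //.
exact: leq_ltn_trans (leq_ord j) lt_im.
Qed.

Lemma take_polyMr m p q : take_poly m (p * take_poly m q) = take_poly m (p * q).
Proof.
apply/polyP => i; rewrite !coef_take_poly; case: ifP => // lt_im.
rewrite !coefM; apply: eq_bigr => j _; rewrite coef_take_poly ifT //.
exact: leq_ltn_trans (leq_subr _ _) lt_im.
Qed.

Lemma take_poly_prod m (I : Type) (r : seq I) (F : I -> {poly R}) :
  take_poly m (\prod_(i <- r) take_poly m (F i)) = take_poly m (\prod_(i <- r) F i).
Proof.
elim: r => [|x r IHr]; first by rewrite !big_nil.
by rewrite !big_cons -take_polyMr IHr take_polyMr take_polyMl.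
Qed.

Lemma take_poly_eqP m p q :
  take_poly m p = take_poly m q <-> (forall i, (i < m)%N -> p`_i = q`_i).
Proof.
split=> [eq_pq i lt_im | eq_pq].
  by have /polyP/(_ i) := eq_pq; rewrite !coef_take_poly lt_im.
by apply/polyP => i; rewrite !coef_take_poly; case: ifP => // /eq_pq.
Qed.

Lemma coef0_exp p m : (p ^+ m)`_0 = p`_0 ^+ m.
Proof. exact: (rmorphXn (coefp 0)). Qed.

End TakePoly.

Lemma take_polyM_eq0 (R : idomainType) m (c p : {poly R}) :
  c`_0 != 0 -> take_poly m (c * p) = 0 -> take_poly m p = 0.
Proof.
move=> c0; rewrite -(take_poly0r _ m) => /take_poly_eqP cp0.
apply/take_poly_eqP => i; elim/ltn_ind: i => i IHi lt_im.
have := cp0 i lt_im; rewrite !coef0 mulrC coefM big_ord_recr /= subnn big1 ?add0r.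
  by move/eqP; rewrite mulf_eq0 (negbTE c0) orbF => /eqP.
by move=> j _; rewrite IHi ?coef0 ?mul0r // (ltn_trans _ lt_im).
Qed.

Lemma take_poly_pow_eq1 (R : idomainType) d m (c : {poly R}) :
  [pchar R] =i pred0 -> (0 < d)%N -> take_poly m (c ^+ d) = 1 ->
  take_poly m c = (c`_0)%:P.
Proof.
move=> char0 d_gt0; case: m => [|m].
  by rewrite take_poly0l => /esym/eqP; rewrite oner_eq0.
move=> cd_1; have /take_poly_eqP cd1 : take_poly m.+1 (c ^+ d) = take_poly m.+1 1.
  by rewrite cd_1 take_poly_id ?size_poly1.
apply/polyP => -[|i]; rewrite coef_take_poly coefC //=; case: ifP => // lt_im.
set g := c ^+ d; have g0 j : (0 < j <= m)%N -> g`_j = 0.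
  by case/andP=> j_gt0 le_jm; rewrite cd1 ?coef1 //= gtn_eqF.
(* Coefficient i of c g' = d g c': the left side is 0 and the right side is
   d (i+1) c_(i+1), since g = 1 + O(X^(m+1)). *)
have g'_c : c * g^`() = (g * c^`()) *+ d.
  by rewrite /g deriv_exp mulrnAr mulrCA -exprS prednK // mulrC.
have lhs0 : (c * g^`())`_i = 0.
  rewrite coefM big1 // => j _; rewrite coef_deriv g0 ?mul0rn ?mulr0 //.
  by have := ltn_ord j; lia.
have rhs : (g * c^`())`_i = c^`()`_i.
  rewrite coefM big_ord_recl big1 => [|j _].
    by rewrite subn0 cd1 // coef1 mul1r addr0.
  by rewrite g0 ?mul0r // lift0; have := ltn_ord j; lia.
have := congr1 (coefp i) g'_c; rewrite /= coefMn lhs0 rhs coef_deriv => /eqP.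
rewrite eq_sym -mulrnA -mulr_natr mulf_eq0 ((pcharf0P R).1 char0) muln_eq0 /=.
by rewrite (gtn_eqF d_gt0) orbF => /eqP.
Qed.

Lemma exists_take_poly_root (F : closedFieldType) d m (w : {poly F}) :
  [pchar F] =i pred0 -> (0 < d)%N -> w`_0 != 0 ->
  exists2 c : {poly F}, c`_0 != 0 & take_poly m (c ^+ d) = take_poly m w.
Proof.
move=> char0 d_gt0 w0.
have [a a_d] : exists a : F, a ^+ d = w`_0.
  have /closed_rootP[a] : size ('X^d - (w`_0)%:P) != 1%N.
    by rewrite size_XnsubC // eqSS -lt0n.
  by rewrite rootE !hornerE subr_eq0 => /eqP; exists a.
have a0 : a != 0 by apply: contraNneq w0 => a0; rewrite -a_d a0 expr0n gtn_eqF.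
have da0 : d%:R * a ^+ d.-1 != 0.
  by rewrite mulf_neq0 ?expf_neq0 // ((pcharf0P F).1 char0) gtn_eqF.
suff lift_root i : exists2 c : {poly F},
    c`_0 = a & forall j, (j <= i)%N -> (c ^+ d)`_j = w`_j.
  have [c c0 cw] := lift_root m; exists c; first by rewrite c0.
  by apply/take_poly_eqP => j lt_jm; rewrite cw // ltnW.
elim: i => [|i [c c0 cw]].
  by exists a%:P => [|[]]; rewrite ?coefC // -polyC_exp coefC a_d.
(* Hensel step: X^(i+1) t contributes d a^(d-1) t to the coefficient of X^(i+1). *)
pose t := (w`_i.+1 - (c ^+ d)`_i.+1) / (d%:R * a ^+ d.-1).
exists (c + t *: 'X^(i.+1)) => [|j le_ji].
  by rewrite coefD coefZ coefXn mulr0 addr0.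
have -> : (c + t *: 'X^(i.+1)) ^+ d = c ^+ d +
    'X^(i.+1) * (t *: \sum_(l < d) (c + t *: 'X^(i.+1)) ^+ (d.-1 - l) * c ^+ l).
  by rewrite -[LHS](subrK (c ^+ d)) subrXX addrAC subrr add0r -scalerAl scalerAr addrC.
rewrite coefD coefXnM; case: ltnP => [lt_ji | le_ij]; first by rewrite addr0 cw.
have -> : j = i.+1 by apply/eqP; rewrite eqn_leq le_ji.
rewrite subnn coefZ coef_sum (eq_bigr (fun _ => a ^+ d.-1)) => [|l _]; last first.
  rewrite coef0M !coef0_exp coefD coefZ coefXn mulr0 addr0 c0 -exprD subnK //.
  by rewrite -ltnS prednK.
by rewrite sumr_const card_ord -mulr_natl divfK // addrC subrK.
Qed.

Section LinearAlgebra.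
Variable k : fieldType.

Definition lin_cmx m p (f : 'cV[k]_m -> 'cV[k]_p) : 'M[k]_(p, m) :=
  \matrix_(i, j) f (delta_mx j 0) i 0.

Lemma mul_lin_cmx m p (f : 'cV[k]_m -> 'cV[k]_p) : linear f ->
  forall u, lin_cmx f *m u = f u.
Proof.
move=> lin_f u; pose fL := GRing.isLinear.Build _ _ _ _ f lin_f.
pose F : {linear _ -> _} := HB.pack f fL.
rewrite [in RHS](matrix_sum_delta u) -[f _]/(F _) linear_sum.
apply/matrixP => i j; rewrite ord1 !mxE summxE; apply: eq_bigr => l _.
by rewrite big_ord1 linearZ !mxE mulrC.
Qed.

Lemma unitmx_inj n (A : 'M[k]_n) :
  (forall x : 'cV_n, A *m x = 0 -> x = 0) -> A \in unitmx.
Proof.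
move=> injA; rewrite -unitmx_tr -row_free_unit; apply: inj_row_free => v.
move/(congr1 trmx); rewrite trmx_mul trmxK trmx0 => /injA.
by move/(congr1 trmx); rewrite trmxK trmx0.
Qed.

Lemma invmxM n (A B : 'M[k]_n) : A \in unitmx -> B \in unitmx ->
  invmx (A *m B) = invmx B *m invmx A.
Proof.
move=> uA uB; have uAB : A *m B \in unitmx by rewrite unitmx_mul uA.
have AB_BiAi : A *m B *m (invmx B *m invmx A) = 1%:M.
  by rewrite mulmxA mulmxK // mulmxV.
by rewrite -[LHS]mulmx1 -AB_BiAi mulmxA mulVmx // mul1mx.
Qed.

Lemma mx_cV_ext m p (A B : 'M[k]_(p, m)) :
  (forall u : 'cV_m, A *m u = B *m u) -> A = B.
Proof.
move=> eqAB; apply: trmx_inj; apply/eqP/mulmxP => v.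
by rewrite -[v]trmxK -!trmx_mul eqAB.
Qed.

End LinearAlgebra.

Section TruncatedPolynomials.
Variables (k : fieldType) (n : nat).
Implicit Types (p q : {poly k}) (u : 'cV[k]_n.+1).

Definition cv_of_poly p : 'cV[k]_n.+1 := \col_i p`_(n - i).

Definition poly_of_cv u : {poly k} := \poly_(i < n.+1) u (inord (n - i)) 0.

Fact cv_of_poly_is_linear : linear cv_of_poly.
Proof. by move=> a p q; apply/matrixP => i j; rewrite !mxE coefD coefZ. Qed.

HB.instance Definition _ := GRing.isLinear.Build k {poly k} 'cV[k]_n.+1 _
  cv_of_poly cv_of_poly_is_linear.

Fact poly_of_cv_is_linear : linear poly_of_cv.
Proof.
move=> a u v; apply/polyP => i; rewrite coefD coefZ !coef_poly.
by case: ifP => _; rewrite ?mulr0 ?addr0 // !mxE.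
Qed.

HB.instance Definition _ := GRing.isLinear.Build k 'cV[k]_n.+1 {poly k} _
  poly_of_cv poly_of_cv_is_linear.

Lemma poly_of_cvK : cancel poly_of_cv cv_of_poly.
Proof.
move=> u; apply/matrixP => i j; rewrite mxE coef_poly ord1 ltnS leq_subr.
by rewrite subKn ?inord_val // -ltnS.
Qed.

Lemma cv_of_polyK p : poly_of_cv (cv_of_poly p) = take_poly n.+1 p.
Proof.
apply/polyP => i; rewrite coef_poly coef_take_poly; case: ifP => // lt_in.
by rewrite mxE inordK ?subKn // ?ltnS ?leq_subr // -ltnS.
Qed.

Lemma cv_of_poly_take p : cv_of_poly (take_poly n.+1 p) = cv_of_poly p.
Proof.
by apply/matrixP => i j; rewrite !mxE coef_take_poly ltnS leq_subr.
Qed.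

Lemma cv_of_poly_eq p q :
  (cv_of_poly p = cv_of_poly q) <-> (take_poly n.+1 p = take_poly n.+1 q).
Proof.
split=> [|eq_pq]; first by rewrite -!cv_of_polyK => ->.
by rewrite -cv_of_poly_take eq_pq cv_of_poly_take.
Qed.

Lemma poly_of_cvE u : poly_of_cv u = \sum_(i < n.+1) u i 0 *: 'X^(n - i).
Proof.
rewrite /poly_of_cv poly_def (reindex_inj rev_ord_inj); apply: eq_bigr => i _ /=.
by rewrite subSS subKn ?inord_val // -ltnS.
Qed.

Lemma poly_of_cv1 : poly_of_cv (cv_of_poly 1) = 1.
Proof. by rewrite cv_of_polyK take_poly_id // size_poly1. Qed.

Definition shift_mx : 'M[k]_n.+1 := lin_cmx (fun u => cv_of_poly ('X * poly_of_cv u)).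

Lemma shift_mx_cv p : shift_mx *m cv_of_poly p = cv_of_poly ('X * p).
Proof.
rewrite mul_lin_cmx => [|a u v]; last by rewrite linearP mulrDr -scalerAr linearP.
by rewrite cv_of_polyK -cv_of_poly_take take_polyMr cv_of_poly_take.
Qed.

Definition mulpoly_mx p : 'M[k]_n.+1 := horner_mx shift_mx p.

HB.instance Definition _ := GRing.LRMorphism.copy mulpoly_mx (horner_mx shift_mx).

Lemma mulpoly_mxX : mulpoly_mx 'X = shift_mx.
Proof. exact: horner_mx_X. Qed.

Lemma mulpoly_mxC c : mulpoly_mx c%:P = c%:M.
Proof. exact: horner_mx_C. Qed.

Lemma mulpoly_mx_cv p q : mulpoly_mx p *m cv_of_poly q = cv_of_poly (p * q).
Proof.
elim/poly_ind: p q => [|p c IHp] q; first by rewrite rmorph0 mul0mx mul0r linear0.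
rewrite rmorphD rmorphM /= mulpoly_mxX mulpoly_mxC -mulmxE mulmxDl -mulmxA.
rewrite shift_mx_cv IHp mul_scalar_mx -linearZ -linearD.
by rewrite mulrDl -mulrA (mulrC 'X) mul_polyC.
Qed.

Lemma mulpoly_mxE p u : mulpoly_mx p *m u = cv_of_poly (p * poly_of_cv u).
Proof. by rewrite -{1}(poly_of_cvK u) mulpoly_mx_cv. Qed.

Lemma mulpoly_mx_cv1 p : mulpoly_mx p *m cv_of_poly 1 = cv_of_poly p.
Proof. by rewrite mulpoly_mx_cv mulr1. Qed.

Lemma poly_of_mulpoly_mx p u :
  poly_of_cv (mulpoly_mx p *m u) = take_poly n.+1 (p * poly_of_cv u).
Proof. by rewrite mulpoly_mxE cv_of_polyK. Qed.

Lemma mulpoly_mx_take p : mulpoly_mx (take_poly n.+1 p) = mulpoly_mx p.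
Proof.
apply: mx_cV_ext => u; rewrite !mulpoly_mxE.
by apply/cv_of_poly_eq; rewrite take_polyMl.
Qed.

Lemma mulpoly_mx_comm p q :
  mulpoly_mx p *m mulpoly_mx q = mulpoly_mx q *m mulpoly_mx p.
Proof. by rewrite mulmxE -!rmorphM mulrC. Qed.

Lemma mulpoly_mxXn : mulpoly_mx 'X^(n.+1) = 0.
Proof.
apply: mx_cV_ext => u; rewrite mulpoly_mxE mul0mx -(linear0 cv_of_poly).
by apply/cv_of_poly_eq; rewrite mulrC take_polyMXn subnn take_poly0l mul0r take_poly0r.
Qed.

Lemma mulpoly_mx_eq0 p : mulpoly_mx p = 0 -> take_poly n.+1 p = 0.
Proof.
move=> p0; have := mulpoly_mx_cv1 p; rewrite p0 mul0mx -(linear0 cv_of_poly).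
by move/esym/cv_of_poly_eq; rewrite take_poly0r.
Qed.

Lemma coefn_rVpoly_mul (a : 'rV[k]_n.+1) u :
  (rVpoly a * poly_of_cv u)`_n = (a *m u) 0 0.
Proof.
rewrite coefM mxE; apply: eq_bigr => j _.
rewrite coef_rVpoly_ord coef_poly ltnS leq_subr.
by rewrite subKn ?inord_val // -ltnS.
Qed.

Lemma coefn_take p : (take_poly n.+1 p)`_n = p`_n.
Proof. by rewrite coef_take_poly ltnSn. Qed.

Lemma coefn_mul_take p q : (p * take_poly n.+1 q)`_n = (p * q)`_n.
Proof. by rewrite -coefn_take take_polyMr coefn_take. Qed.

Lemma coefn_take_mul p q : (take_poly n.+1 p * q)`_n = (p * q)`_n.
Proof. by rewrite -coefn_take take_polyMl coefn_take. Qed.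

Lemma mulpoly_mx_unit (c : {poly k}) : c`_0 != 0 -> mulpoly_mx c \in unitmx.
Proof.
move=> c0; apply: unitmx_inj => x; rewrite mulpoly_mxE -(linear0 cv_of_poly).
move/cv_of_poly_eq; rewrite take_poly0r => /(take_polyM_eq0 c0) px0.
by rewrite -[x]poly_of_cvK -cv_of_poly_take px0.
Qed.

End TruncatedPolynomials.

Arguments cv_of_poly {k n}.
Arguments shift_mx {k n}.
Arguments mulpoly_mx {k n}.

Lemma eq_Theta (k : fieldType) d n (u v : nat -> 'cV[k]_n) :
  u =1 v -> Theta d u = Theta d v.
Proof. by move=> eq_uv; apply: eq_bigr => t _; apply: eq_bigr => j _; rewrite eq_uv. Qed.

Section ThetaAsCoefficient.
Variables (k : fieldType) (n : nat).
Implicit Types (p : {poly k}) (u : nat -> 'cV[k]_n.+1).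

Lemma Theta_poly d u : (0 < d)%N -> Theta d u = (\prod_(j < d) poly_of_cv (u j))`_n.
Proof.
move=> d_gt0; rewrite (eq_bigr _ (fun (j : 'I_d) _ => poly_of_cvE (u j))).
rewrite bigA_distr_bigA /=.
rewrite coef_sum /Theta big_mkcond /=; apply: eq_bigr => t _.
rewrite scaler_prod prodrXr coefZ coefXn sumnB => [|j _]; last by rewrite -ltnS.
rewrite sum_nat_const card_ord subSS subn0.
have le_td : (\sum_(j < d) t j <= d * n)%N.
  rewrite -[X in (_ <= X * n)%N]card_ord -sum_nat_const.
  by apply: leq_sum => j _; rewrite -ltnS.
have le_nd : (n <= d * n)%N by rewrite leq_pmull.
rewrite mulnBl mul1n; set S := (\sum_(j < d) _)%N in le_td *.
have -> : (n == d * n - S)%N = (S == d * n - n)%N by apply/eqP/eqP; lia.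
by case: eqP; rewrite ?mulr1 ?mulr0.
Qed.

Lemma Theta_mulpoly d (c : nat -> {poly k}) u : (0 < d)%N ->
  Theta d (fun j => mulpoly_mx (c j) *m u j) =
  (\prod_(j < d) c j * \prod_(j < d) poly_of_cv (u j))`_n.
Proof.
move=> d_gt0; rewrite Theta_poly //; under eq_bigr do rewrite poly_of_mulpoly_mx.
by rewrite -coefn_take take_poly_prod coefn_take big_split.
Qed.

Lemma prod_poly_of_cv_nth d (s : seq 'cV[k]_n.+1) : (size s <= d)%N ->
  \prod_(j < d) poly_of_cv (nth (cv_of_poly 1) s j) = \prod_(x <- s) poly_of_cv x.
Proof.
move=> le_sd; rewrite -(big_mkord xpredT (fun j => poly_of_cv (nth (cv_of_poly 1) s j))).
rewrite (@big_cat_nat _ _ _ (size s)) //= [X in _ * X]big1_seq ?mulr1.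
  by rewrite (big_nth (cv_of_poly 1)).
move=> j /andP[_]; rewrite mem_index_iota => /andP[le_sj _].
by rewrite nth_default // poly_of_cv1.
Qed.

Lemma Theta_upd_mulpoly d (i : 'I_d) p u :
  Theta d (upd i (mulpoly_mx p) u) = (p * \prod_(j < d) poly_of_cv (u j))`_n.
Proof.
have d_gt0 : (0 < d)%N by apply: leq_ltn_trans (ltn_ord i).
rewrite (@eq_Theta _ _ _ _ (fun j => mulpoly_mx (if j == i then p else 1) *m u j)).
  by rewrite Theta_mulpoly // -big_mkcond (big_pred1 i).
by move=> j; rewrite /upd; case: eqP => _; rewrite ?rmorph1 ?mul1mx.
Qed.

Lemma Cent_mulpoly_mx d p : (1 < d)%N -> Cent d (mulpoly_mx p : 'M[k]_n.+1).
Proof.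
move=> d_gt1 u.
by rewrite (Theta_upd_mulpoly (Ordinal (ltnW d_gt1))) (Theta_upd_mulpoly (Ordinal d_gt1)).
Qed.

Lemma cv_of_poly_pairing p q :
  (forall y : 'cV[k]_n.+1, (p * poly_of_cv y)`_n = (q * poly_of_cv y)`_n) ->
  cv_of_poly p = cv_of_poly q :> 'cV[k]_n.+1.
Proof.
move=> eq_pq; apply/cv_of_poly_eq/take_poly_eqP => i lt_in.
have := eq_pq (cv_of_poly 'X^(n - i)); rewrite cv_of_polyK !coefn_mul_take !coefMXn.
by rewrite ltnNge leq_subr subKn // -ltnS.
Qed.

Lemma Cent_mulpolyE d (f : 'M[k]_n.+1) : (2 < d)%N -> Cent d f ->
  f = mulpoly_mx (poly_of_cv (f *m cv_of_poly 1)).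
Proof.
move=> d_gt2 Cf; apply: mx_cV_ext => x; rewrite mulpoly_mxE -[f *m x]poly_of_cvK.
apply: cv_of_poly_pairing => y; set e1 := cv_of_poly 1.
have upd0 : upd 0 f (nth e1 [:: x; e1; y]) =1 nth e1 [:: f *m x; e1; y].
  by rewrite /upd => -[|[|[|j]]].
have upd1 : upd 1 f (nth e1 [:: x; e1; y]) =1 nth e1 [:: x; f *m e1; y].
  by rewrite /upd => -[|[|[|j]]].
have := Cf (nth e1 [:: x; e1; y]); rewrite (eq_Theta _ upd0) (eq_Theta _ upd1).
rewrite !Theta_poly ?(ltnW (ltnW d_gt2)) // !prod_poly_of_cv_nth //.
rewrite !big_cons big_nil poly_of_cv1 !mulr1 mul1r => ->.
by rewrite mulrA (mulrC (poly_of_cv x)).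
Qed.

End ThetaAsCoefficient.

Section Conjugation.
Variables (k : fieldType) (d n : nat).
Implicit Types (s t f g : 'M[k]_n).

Lemma rootn1_neq0 (z : k) : (0 < d)%N -> z ^+ d = 1 -> z != 0.
Proof.
by move=> d_gt0; apply: contra_eq_neq => ->; rewrite expr0n gtn_eqF // eq_sym oner_neq0.
Qed.

Lemma Orth_scalar (z : k) : (0 < d)%N -> z ^+ d = 1 -> Orth d (z%:M : 'M[k]_n).
Proof.
move=> d_gt0 zd1; have z0 := rootn1_neq0 d_gt0 zd1.
split=> [|u]; first by rewrite unitmxE det_scalar unitfE expf_neq0.
apply: eq_bigr => t _; under eq_bigr do rewrite mul_scalar_mx mxE.
by rewrite big_split /= prodr_const card_ord zd1 mul1r.
Qed.

Lemma Orth_invmx s : Orth d s -> Orth d (invmx s).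
Proof.
case=> s_unit Os; split=> [|u]; first by rewrite unitmx_inv.
by rewrite -Os; apply: eq_Theta => j; rewrite mulKVmx.
Qed.

Lemma Cent_chi s f : Orth d s -> Cent d f -> Cent d (chi s f).
Proof.
case=> s_unit Os Cf u; pose v j := invmx s *m u j.
have upd_chi i : Theta d (upd i (chi s f) u) = Theta d (upd i f v).
  rewrite -[RHS]Os; apply: eq_Theta => j; rewrite /upd /chi /v.
  by case: eqP => _; rewrite ?mulKVmx ?mulmxA.
by rewrite !upd_chi.
Qed.

Lemma chiM s t f : s \in unitmx -> t \in unitmx -> chi (s *m t) f = chi s (chi t f).
Proof. by move=> s_unit t_unit; rewrite /chi invmxM // !mulmxA. Qed.

Lemma chiK s : s \in unitmx -> cancel (chi s) (chi (invmx s)).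
Proof.
by move=> s_unit f; rewrite -chiM ?unitmx_inv // mulVmx // /chi invmx1 mulmx1 mul1mx.
Qed.

Lemma CentAut_chi s : Orth d s -> CentAut d (chi s).
Proof.
move=> Os; have s_unit := Os.1; split=> [f|]; first exact: Cent_chi.
split=> [f g _ _ | g Cg | | a f g _ _ | f g _ _].
- by move=> eq_fg; rewrite -(chiK s_unit f) eq_fg chiK.
- exists (chi (invmx s) g); first by apply: Cent_chi => //; apply: Orth_invmx.
  have si_unit : invmx s \in unitmx by rewrite unitmx_inv.
  by rewrite -{2}(chiK si_unit g) invmxK.
- by rewrite /chi mulmx1 mulmxV.
- by rewrite /chi mulmxDr mulmxDl -!scalemxAr -scalemxAl.
- by rewrite /chi !mulmxA mulmxKV.
Qed.

Lemma chi_scalar (z : k) f : z != 0 -> chi z%:M f = f.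
Proof.
move=> z0; have z_unit : (z%:M : 'M[k]_n) \in unitmx.
  by rewrite unitmxE det_scalar unitfE expf_neq0.
by rewrite /chi -scalar_mxC -mulmxA mulmxV ?mulmx1.
Qed.

End Conjugation.

Section Kernel.
Variables (k : fieldType) (n d : nat).

Lemma comm_mulpoly_mxE (s : 'M[k]_n.+1) :
  (forall p, s *m mulpoly_mx p = mulpoly_mx p *m s) ->
  s = mulpoly_mx (poly_of_cv (s *m cv_of_poly 1)).
Proof.
move=> s_comm; apply: mx_cV_ext => x.
have -> : x = mulpoly_mx (poly_of_cv x) *m cv_of_poly 1.
  by rewrite mulpoly_mx_cv1 poly_of_cvK.
by rewrite mulmxA s_comm -mulmxA mulpoly_mxE mulpoly_mx_cv1 mulpoly_mx_cv mulrC.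
Qed.

Lemma Orth_mulpoly_mx_pow (c : {poly k}) : (0 < d)%N ->
  Orth d (mulpoly_mx c : 'M[k]_n.+1) -> take_poly n.+1 (c ^+ d) = 1.
Proof.
move=> d_gt0 [_ Oc].
suff /cv_of_poly_eq -> : cv_of_poly (c ^+ d) = cv_of_poly 1 :> 'cV[k]_n.+1.
  by rewrite take_poly_id ?size_poly1.
apply: cv_of_poly_pairing => y; have := Oc (nth (cv_of_poly 1) [:: y]).
rewrite Theta_mulpoly // Theta_poly // !prod_poly_of_cv_nth // big_seq1.
by rewrite prodr_const card_ord mul1r.
Qed.

Lemma ker_chiP (s : 'M[k]_n.+1) : [pchar k] =i pred0 -> (1 < d)%N -> Orth d s ->
  (forall f, Cent d f -> chi s f = f) <-> exists2 z : k, z ^+ d = 1 & s = z%:M.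
Proof.
move=> char0 d_gt1 Os; have d_gt0 := ltnW d_gt1.
split=> [chi_id | [z zd1 ->] f _]; last by apply/chi_scalar/(rootn1_neq0 d_gt0).
have s_comm p : s *m mulpoly_mx p = mulpoly_mx p *m s.
  have e := chi_id _ (Cent_mulpoly_mx p d_gt1).
  by rewrite -{2}e /chi mulmxKV //; case: Os.
have sE := comm_mulpoly_mxE s_comm; set c := poly_of_cv _ in sE.
have cd1 : take_poly n.+1 (c ^+ d) = 1.
  by apply: (Orth_mulpoly_mx_pow d_gt0); rewrite -sE.
exists c`_0; first by have /polyP/(_ 0%N) := cd1; rewrite coef_take_poly coef1 coef0_exp.
by rewrite sE -mulpoly_mx_take (take_poly_pow_eq1 char0 d_gt0 cd1) mulpoly_mxC.
Qed.

End Kernel.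

Section Surjectivity.
Variables (k : closedFieldType) (n d : nat) (phi : 'M[k]_n.+1 -> 'M[k]_n.+1).
Hypotheses (d_gt2 : (2 < d)%N)
  (phi_Cent : forall f, Cent d f -> Cent d (phi f))
  (phi_inj : forall f g, Cent d f -> Cent d g -> phi f = phi g -> f = g)
  (phi1 : phi 1%:M = 1%:M)
  (phi_lin : forall a f g, Cent d f -> Cent d g ->
     phi (a *: f + g) = a *: phi f + phi g)
  (phiM : forall f g, Cent d f -> Cent d g -> phi (f *m g) = phi f *m phi g).

Implicit Types (p : {poly k}) (u : 'cV[k]_n.+1).

Let Cent_mulpoly p : Cent d (mulpoly_mx p : 'M[k]_n.+1) := Cent_mulpoly_mx p (ltnW d_gt2).

Definition phi_poly p := phi (mulpoly_mx p).

Fact phi_poly_is_linear : linear phi_poly.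
Proof. by move=> a p q; rewrite /phi_poly linearP phi_lin //; apply: Cent_mulpoly. Qed.

HB.instance Definition _ :=
  GRing.isLinear.Build k {poly k} 'M[k]_n.+1 _ phi_poly phi_poly_is_linear.

Fact phi_poly_is_monoid_morphism : monoid_morphism phi_poly.
Proof.
split=> [|p q]; rewrite /phi_poly ?rmorph1 // rmorphM -mulmxE phiM //.
all: exact: Cent_mulpoly.
Qed.

HB.instance Definition _ :=
  GRing.isMonoidMorphism.Build {poly k} 'M[k]_n.+1 phi_poly phi_poly_is_monoid_morphism.

Lemma phi_polyE p : phi_poly p = mulpoly_mx (poly_of_cv (phi_poly p *m cv_of_poly 1)).
Proof. exact: Cent_mulpolyE d_gt2 (phi_Cent (Cent_mulpoly p)). Qed.

Lemma phi_poly_take p : phi_poly (take_poly n.+1 p) = phi_poly p.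
Proof. by rewrite /phi_poly mulpoly_mx_take. Qed.

Definition phiX := poly_of_cv (phi_poly 'X *m cv_of_poly 1).

Lemma phi_polyX : phi_poly 'X = mulpoly_mx phiX.
Proof. exact: phi_polyE. Qed.

Lemma phiX_coef0 : phiX`_0 = 0.
Proof.
have : take_poly n.+1 (phiX ^+ n.+1) = 0.
  apply: (@mulpoly_mx_eq0 _ n); rewrite rmorphXn /= -phi_polyX -rmorphXn /=.
  rewrite /phi_poly mulpoly_mxXn.
  by rewrite -{1}(rmorph0 (@mulpoly_mx k n)) -/(phi_poly 0) rmorph0.
move/polyP/(_ 0%N); rewrite coef_take_poly coef0 coef0_exp => /eqP.
by rewrite expf_eq0 => /andP[_ /eqP].
Qed.

Definition phi_mx :=
  lin_cmx (fun u : 'cV[k]_n.+1 => phi_poly (poly_of_cv u) *m cv_of_poly 1).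

Lemma mul_phi_mx u : phi_mx *m u = phi_poly (poly_of_cv u) *m cv_of_poly 1.
Proof. by rewrite mul_lin_cmx // => a v w; rewrite !linearP /= mulmxDl scalemxAl. Qed.

Lemma phi_mx_mulpoly p u :
  phi_mx *m (mulpoly_mx p *m u) = phi_poly p *m (phi_mx *m u).
Proof.
by rewrite !mul_phi_mx poly_of_mulpoly_mx phi_poly_take rmorphM -mulmxE mulmxA.
Qed.

Lemma phi_mx_unit : phi_mx \in unitmx.
Proof.
apply: unitmx_inj => x; rewrite mul_phi_mx => phi_x1.
have phi_x : phi_poly (poly_of_cv x) = phi_poly 0.
  by rewrite phi_polyE phi_x1 linear0 !rmorph0.
have := phi_inj (Cent_mulpoly (poly_of_cv x)) (Cent_mulpoly 0) phi_x.
by rewrite rmorph0 => px0; rewrite -[x]poly_of_cvK -mulpoly_mx_cv1 px0 mul0mx.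
Qed.

Definition phi_dual := rVpoly (row 0 (invmx phi_mx)).

Lemma coefn_phi_dual G : (phi_dual * poly_of_cv (phi_poly G *m cv_of_poly 1))`_n = G`_n.
Proof.
rewrite coefn_rVpoly_mul -phi_poly_take -cv_of_polyK -mul_phi_mx -row_mul.
by rewrite mulKmx ?phi_mx_unit // !mxE subn0.
Qed.

Lemma phi_dual_coef0 : phi_dual`_0 != 0.
Proof.
have phiXE : phiX = drop_poly 1 phiX * 'X.
  rewrite -{1}(poly_take_drop 1 phiX) expr1 [take_poly 1 phiX](_ : _ = 0) ?add0r //.
  by apply/polyP => -[|i]; rewrite coef_take_poly ?phiX_coef0 // coef0.
have := coefn_phi_dual 'X^n; rewrite coefXn eqxx rmorphXn /= phi_polyX -rmorphXn /=.
rewrite mulpoly_mx_cv1 cv_of_polyK coefn_mul_take phiXE exprMn mulrA coefMXn ltnn.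
rewrite subnn coef0M => dual1; apply/eqP => dual0.
by move: dual1; rewrite dual0 mul0r => /eqP; rewrite eq_sym oner_eq0.
Qed.

Hypothesis char0 : [pchar k] =i pred0.

Lemma CentAut_chi_surj : exists2 s, Orth d s & forall f, Cent d f -> phi f = chi s f.
Proof.
have [C C0 CW] := exists_take_poly_root n.+1 char0 (ltnW (ltnW d_gt2)) phi_dual_coef0.
pose s := mulpoly_mx C *m phi_mx.
have s_unit : s \in unitmx by rewrite unitmx_mul phi_mx_unit mulpoly_mx_unit.
have s_mulpoly p : s *m mulpoly_mx p = phi_poly p *m s.
  apply: mx_cV_ext => x; rewrite -!mulmxA phi_mx_mulpoly phi_polyE !mulmxA.
  by rewrite mulpoly_mx_comm.
exists s; last by move=> f Cf; rewrite (Cent_mulpolyE d_gt2 Cf) /chi s_mulpoly mulmxK.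
split=> // u; pose g j := poly_of_cv (phi_poly (poly_of_cv (u j)) *m cv_of_poly 1).
have s_u j : s *m u j = mulpoly_mx (C * g j) *m cv_of_poly 1.
  by rewrite -mulmxA mul_phi_mx phi_polyE rmorphM -mulmxE mulmxA.
have prod_g : mulpoly_mx (\prod_(j < d) g j) = phi_poly (\prod_(j < d) poly_of_cv (u j)).
  by rewrite !rmorph_prod; apply: eq_bigr => j _ /=; rewrite -phi_polyE.
rewrite (eq_Theta _ s_u) Theta_mulpoly ?(ltnW (ltnW d_gt2)) //.
rewrite poly_of_cv1 prodr_const expr1n mulr1 big_split /= prodr_const card_ord.
rewrite -coefn_take_mul CW coefn_take_mul -coefn_mul_take -cv_of_polyK.
by rewrite -mulpoly_mx_cv1 prod_g coefn_phi_dual Theta_poly ?(ltnW (ltnW d_gt2)).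
Qed.

End Surjectivity.

Theorem theorem4p3 (k : closedFieldType) (d n : nat)
  (hchar : [pchar k] =i pred0) (hd : (3 <= d)%N) (hn : (2 <= n)%N) :
  (* mu_d -> O(Theta_d), zeta |-> zeta id, is well defined and injective *)
  (forall z : k, z ^+ d = 1 -> Orth d (z%:M : 'M[k]_n)) /\
  (forall z1 z2 : k, (z1%:M : 'M[k]_n) = z2%:M -> z1 = z2) /\
  (* chi : O(Theta_d) -> G is well defined and a group homomorphism *)
  (forall s : 'M[k]_n, Orth d s -> CentAut d (chi s)) /\
  (forall s t : 'M[k]_n, Orth d s -> Orth d t ->
     forall f, Cent d f -> chi (s *m t) f = chi s (chi t f)) /\
  (* exactness at O(Theta_d): ker chi = mu_d *)
  (forall s : 'M[k]_n, Orth d s ->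
     ((forall f, Cent d f -> chi s f = f) <-> exists2 z : k, z ^+ d = 1 & s = z%:M)) /\
  (* exactness at G: chi is surjective *)
  (forall phi : 'M[k]_n -> 'M[k]_n, CentAut d phi ->
     exists2 s : 'M[k]_n, Orth d s & forall f, Cent d f -> phi f = chi s f).
Proof.
case: n hn => [|n] // _; have d_gt1 : (1 < d)%N := ltnW hd.
split; first by move=> z; apply: Orth_scalar (ltnW d_gt1).
split; first by move=> z1 z2 /matrixP/(_ 0 0); rewrite !mxE /= !mulr1n.
split; first by move=> s; apply: CentAut_chi.
split; first by move=> s t [s_unit _] [t_unit _] f _; apply: chiM.
split; first by move=> s; apply: ker_chiP.
by move=> phi [phi_Cent [phi_inj _ phi1 phi_lin phiM]]; apply: CentAut_chi_surj.
Qed.
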